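(* For all unitary distributions of closed abstractions $\big(\sum_{i=1}^n\alpha_i\cdot\lambda x.\vec t_i\big)\in\mathcal S$ and all types $A,B$: $\sum_{i=1}^n\alpha_i\cdot\lambda x.\vec t_i\in[\![A\Rightarrow B]\!]$ if and only if $\lambda x.\big(\sum_{i=1}^n\alpha_i\cdot\vec t_i\big)\in[\![A\rightarrow B]\!]$.
   Context: Calculus. Pure values $v::=x\mid\lambda x.\vec s\mid *\mid(v_1,v_2)\mid\mathtt{inl}(v)\mid\mathtt{inr}(v)$; pure terms add application $s\,t$, sequence $t;\vec s$, $\mathtt{let}\,(x_1,x_2)=t\,\mathtt{in}\,\vec s$ and $\mathtt{match}\,t\{\mathtt{inl}\,x_1\mapsto\vec s_1\mid\mathtt{inr}\,x_2\mapsto\vec s_2\}$; term distributions are formal expressions $\vec 0\mid t\mid\vec s+\vec t\mid\alpha\cdot\vec t$ ($\alpha\in\mathbb C$), taken at top level modulo the weak-vector-space congruence (which never acts inside pure terms, e.g. inside an abstraction body, and does not identify $0\cdot t$ with $\vec 0$); canonical form $\sum_i\alpha_it_i$ with distinct $t_i$. Bilinear substitution $\vec t\langle x:=\vec w\rangle=\sum_j\beta_j\vec t[x:=w_j]$ for $\vec w=\sum_j\beta_jw_j$. Evaluation $\succ^*$ is the reflexive-transitive closure of one-step evaluation $\alpha\cdot s+\vec r\succ\alpha\cdot\vec s'+\vec r$ whenever $s\triangleright\vec s'$, where $\triangleright$ is call-by-value atomic evaluation ($(\lambda x.\vec t)v\triangleright\vec t[x:=v]$, $*;\vec s\triangleright\vec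 s$, let/match on value constructors, and closure rules under the evaluated positions). Semantics. $\mathcal S$ is the set of closed value distributions of $\ell_2$-norm $1$, where for canonical forms $\|\sum_i\alpha_iv_i\|^2=\sum_i|\alpha_i|^2$. Types are given by a set $[\![A]\!]\subseteq\mathcal S$; $\vec t\Vdash A$ iff $\vec t\succ^*\vec v$ for some $\vec v\in[\![A]\!]$. $[\![A\rightarrow B]\!]=\{\lambda x.\vec t\ \text{closed}:\forall\vec v\in[\![A]\!],\ \vec t\langle x:=\vec v\rangle\Vdash B\}$ and $[\![A\Rightarrow B]\!]=\{(\sum_{i=1}^n\alpha_i\cdot\lambda x.\vec t_i)\in\mathcal S:\forall\vec v\in[\![A]\!],\ (\sum_i\alpha_i\cdot\vec t_i\langle x:=\vec v\rangle)\Vdash B\}$. *)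

From Stdlib Require Import Reals List Relations.
From Coquelicot Require Import Coquelicot.
Set Implicit Arguments.

(* Syntax (de Bruijn indices).                                         *)
(* Lam d binds index 0 in d; Let t d binds x1 = index 1, x2 = index 0  *)
(* in d; each branch of Match binds index 0.                           *)
Inductive value : Type :=
| Var : nat -> value
| Lam : tdist -> value
| Star : value
| Pair : value -> value -> value
| Inl : value -> value
| Inr : value -> value
with term : Type :=
| Val : value -> term
| App : term -> term -> term
| Seq : term -> tdist -> term
| Let : term -> tdist -> term
| Match : term -> tdist -> tdist -> term
with tdist : Type :=
| DZero : tdist
| DTm : term -> tdist
| DAdd : tdist -> tdist -> tdist
| DScale : C -> tdist -> tdist.

Definition up_ren (f : nat -> nat) (n : nat) : nat :=
  match n with 0 => 0 | S m => S (f m) end.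

Fixpoint ren_v (f : nat -> nat) (v : value) : value :=
  match v with
  | Var n => Var (f n)
  | Lam d => Lam (ren_d (up_ren f) d)
  | Star => Star
  | Pair v1 v2 => Pair (ren_v f v1) (ren_v f v2)
  | Inl v1 => Inl (ren_v f v1)
  | Inr v1 => Inr (ren_v f v1)
  end
with ren_t (f : nat -> nat) (t : term) : term :=
  match t with
  | Val v => Val (ren_v f v)
  | App s u => App (ren_t f s) (ren_t f u)
  | Seq s d => Seq (ren_t f s) (ren_d f d)
  | Let s d => Let (ren_t f s) (ren_d (up_ren (up_ren f)) d)
  | Match s d1 d2 => Match (ren_t f s) (ren_d (up_ren f) d1) (ren_d (up_ren f) d2)
  end
with ren_d (f : nat -> nat) (d : tdist) : tdist :=
  match d with
  | DZero => DZero
  | DTm t => DTm (ren_t f t)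
  | DAdd a b => DAdd (ren_d f a) (ren_d f b)
  | DScale a e => DScale a (ren_d f e)
  end.

Definition up_sub (s : nat -> value) (n : nat) : value :=
  match n with 0 => Var 0 | S m => ren_v S (s m) end.

Fixpoint sub_v (s : nat -> value) (v : value) : value :=
  match v with
  | Var n => s n
  | Lam d => Lam (sub_d (up_sub s) d)
  | Star => Star
  | Pair v1 v2 => Pair (sub_v s v1) (sub_v s v2)
  | Inl v1 => Inl (sub_v s v1)
  | Inr v1 => Inr (sub_v s v1)
  end
with sub_t (s : nat -> value) (t : term) : term :=
  match t with
  | Val v => Val (sub_v s v)
  | App a b => App (sub_t s a) (sub_t s b)
  | Seq a d => Seq (sub_t s a) (sub_d s d)
  | Let a d => Let (sub_t s a) (sub_d (up_sub (up_sub s)) d)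
  | Match a d1 d2 => Match (sub_t s a) (sub_d (up_sub s) d1) (sub_d (up_sub s) d2)
  end
with sub_d (s : nat -> value) (d : tdist) : tdist :=
  match d with
  | DZero => DZero
  | DTm t => DTm (sub_t s t)
  | DAdd a b => DAdd (sub_d s a) (sub_d s b)
  | DScale a e => DScale a (sub_d s e)
  end.

Definition scons1 (v : value) (n : nat) : value :=
  match n with 0 => v | S m => Var m end.
(* [x1 := v1, x2 := v2] for let: x2 is index 0, x1 is index 1 *)
Definition scons2 (v1 v2 : value) (n : nat) : value :=
  match n with 0 => v2 | 1 => v1 | S (S m) => Var m end.

Definition subst1 (d : tdist) (v : value) : tdist := sub_d (scons1 v) d.

Fixpoint closed_v (k : nat) (v : value) : Prop :=
  match v with
  | Var n => (n < k)%nat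
  | Lam d => closed_d (S k) d
  | Star => True
  | Pair v1 v2 => closed_v k v1 /\ closed_v k v2
  | Inl v1 => closed_v k v1
  | Inr v1 => closed_v k v1
  end
with closed_t (k : nat) (t : term) : Prop :=
  match t with
  | Val v => closed_v k v
  | App a b => closed_t k a /\ closed_t k b
  | Seq a d => closed_t k a /\ closed_d k d
  | Let a d => closed_t k a /\ closed_d (S (S k)) d
  | Match a d1 d2 => closed_t k a /\ closed_d (S k) d1 /\ closed_d (S k) d2
  end
with closed_d (k : nat) (d : tdist) : Prop :=
  match d with
  | DZero => True
  | DTm t => closed_t k t
  | DAdd a b => closed_d k a /\ closed_d k b
  | DScale _ e => closed_d k e
  end.

(* Weak vector space congruence (top level only; never inside terms). *)
(* Note 0 . d is NOT identified with 0.                                *)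
Inductive deq : tdist -> tdist -> Prop :=
| deq_refl d : deq d d
| deq_sym d e : deq d e -> deq e d
| deq_trans d e f : deq d e -> deq e f -> deq d f
| deq_add a a' b b' : deq a a' -> deq b b' -> deq (DAdd a b) (DAdd a' b')
| deq_scale (al : C) a a' : deq a a' -> deq (DScale al a) (DScale al a')
| ax_zero a : deq (DAdd a DZero) a
| ax_comm a b : deq (DAdd a b) (DAdd b a)
| ax_assoc a b c : deq (DAdd (DAdd a b) c) (DAdd a (DAdd b c))
| ax_one a : deq (DScale (RtoC 1) a) a
| ax_mult (al be : C) a : deq (DScale al (DScale be a)) (DScale (Cmult al be) a)
| ax_distr_scal (al be : C) a :
    deq (DScale (Cplus al be) a) (DAdd (DScale al a) (DScale be a))
| ax_distr_vec (al : C) a b :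
    deq (DScale al (DAdd a b)) (DAdd (DScale al a) (DScale al b))
| ax_scale_zero (al : C) : deq (DScale al DZero) DZero.

Definition sum_dist (l : list (C * tdist)) : tdist :=
  fold_right (fun p acc => DAdd (DScale (fst p) (snd p)) acc) DZero l.
Definition sum_vals (l : list (C * value)) : tdist :=
  fold_right (fun p acc => DAdd (DScale (fst p) (DTm (Val (snd p)))) acc) DZero l.
Definition sum_abs (l : list (C * tdist)) : tdist :=
  fold_right (fun p acc => DAdd (DScale (fst p) (DTm (Val (Lam (snd p))))) acc) DZero l.

Fixpoint dmap (f : term -> term) (d : tdist) : tdist :=
  match d with
  | DZero => DZero
  | DTm t => DTm (f t)
  | DAdd a b => DAdd (dmap f a) (dmap f b)
  | DScale a e => DScale a (dmap f e)
  end.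

Inductive atom : term -> tdist -> Prop :=
| at_beta d v : atom (App (Val (Lam d)) (Val v)) (subst1 d v)
| at_seq d : atom (Seq (Val Star) d) d
| at_let v1 v2 d : atom (Let (Val (Pair v1 v2)) d) (sub_d (scons2 v1 v2) d)
| at_inl v d1 d2 : atom (Match (Val (Inl v)) d1 d2) (subst1 d1 v)
| at_inr v d1 d2 : atom (Match (Val (Inr v)) d1 d2) (subst1 d2 v)
| at_appR s t d : atom t d -> atom (App s t) (dmap (App s) d)
| at_appL s v d : atom s d -> atom (App s (Val v)) (dmap (fun u => App u (Val v)) d)
| at_seqC t d e : atom t d -> atom (Seq t e) (dmap (fun u => Seq u e) d)
| at_letC t d e : atom t d -> atom (Let t e) (dmap (fun u => Let u e) d)
| at_matchC t d e1 e2 : atom t d -> atom (Match t e1 e2) (dmap (fun u => Match u e1 e2) d).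

Definition step (d e : tdist) : Prop :=
  exists (al : C) (s : term) (r d' : tdist),
    deq d (DAdd (DScale al (DTm s)) r) /\ atom s d' /\
    deq e (DAdd (DScale al d') r).

Definition step_or_eq (d e : tdist) : Prop := deq d e \/ step d e.
Definition evals : tdist -> tdist -> Prop :=
  Relation_Operators.clos_refl_trans tdist step_or_eq.

Definition canon_form (d : tdist) (ws : list (C * value)) : Prop :=
  NoDup (map snd ws) /\ deq d (sum_vals ws).

Definition sqnorm (ws : list (C * value)) : R :=
  fold_right (fun p acc => (Cmod (fst p) ^ 2 + acc)%R) 0%R ws.

Definition in_S (d : tdist) : Prop :=
  exists ws, canon_form d ws /\ List.Forall (fun p => closed_v 0 (snd p)) ws /\
             sqnorm ws = 1%R.

Definition is_type (A : tdist -> Prop) : Prop :=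
  (forall d, A d -> in_S d) /\ (forall d e, deq d e -> A d -> A e).

Definition realizes (d : tdist) (B : tdist -> Prop) : Prop :=
  exists v, evals d v /\ B v.

(* bilinear substitution body<x := w> = sum_j b_j body[x := w_j],
   for the canonical form w = sum_j b_j w_j *)
Definition bsum (body : tdist) (ws : list (C * value)) : tdist :=
  fold_right (fun p acc => DAdd (DScale (fst p) (subst1 body (snd p))) acc) DZero ws.

Definition arrow_sem (A B : tdist -> Prop) (d : tdist) : Prop :=
  exists body, deq d (DTm (Val (Lam body))) /\ closed_v 0 (Lam body) /\
    forall v, A v -> exists ws, canon_form v ws /\ realizes (bsum body ws) B.

Definition Arrow_sem (A B : tdist -> Prop) (d : tdist) : Prop :=
  in_S d /\
  exists l : list (C * tdist), deq d (sum_abs l) /\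
    forall v, A v -> exists ws, canon_form v ws /\
      realizes (fold_right (fun p acc => DAdd (DScale (fst p) (bsum (snd p) ws)) acc)
                           DZero l) B.

(* Applying a superposition of abstractions sum_i a_i . \x.t_i to an argument
   distribution w is linear: the result sum_i a_i . t_i<x := w> is congruent to
   (sum_i a_i . t_i)<x := w>.  It depends only on the congruence class of the
   superposition, because replacing every leaf \x.t by t<x := w> is a linear
   map and therefore respects the weak-vector-space congruence.  Conversely,
   the congruence never identifies two distinct single terms (the coefficient
   of a fixed term is an invariant), so \x.(sum_i a_i . t_i) determines its body. *)
From Stdlib Require Import Reals List.
From Coquelicot Require Import Coquelicot.
From Stdlib Require Import ClassicalEpsilon.

Definition dsum {X : Type} (f : X -> tdist) (l : list (C * X)) : tdist :=
  fold_right (fun p acc => DAdd (DScale (fst p) (f (snd p))) acc) DZero l.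

Fixpoint dlin (f : term -> tdist) (d : tdist) : tdist :=
  match d with
  | DZero => DZero
  | DTm t => f t
  | DAdd a b => DAdd (dlin f a) (dlin f b)
  | DScale al e => DScale al (dlin f e)
  end.

Lemma dlin_deq f d e : deq d e -> deq (dlin f d) (dlin f e).
Proof.
  induction 1; simpl; try (constructor; assumption).
  eapply deq_trans; eassumption.
Qed.

Lemma deq_add_swap a b c d :
  deq (DAdd (DAdd a b) (DAdd c d)) (DAdd (DAdd a c) (DAdd b d)).
Proof.
  eapply deq_trans; [apply ax_assoc|].
  eapply deq_trans; [|apply deq_sym, ax_assoc].
  apply deq_add; [apply deq_refl|].
  eapply deq_trans; [apply deq_sym, ax_assoc|].
  eapply deq_trans; [|apply ax_assoc].
  apply deq_add; [apply ax_comm | apply deq_refl].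
Qed.

Section LinearSums.

Context {X : Type}.

Lemma dsum_zero (l : list (C * X)) : deq (dsum (fun _ => DZero) l) DZero.
Proof.
  induction l as [|[b x] l IH]; simpl; [apply deq_refl|].
  eapply deq_trans; [apply deq_add; [apply ax_scale_zero | exact IH]|].
  apply ax_zero.
Qed.

Lemma dsum_add (f g : X -> tdist) l :
  deq (dsum (fun x => DAdd (f x) (g x)) l) (DAdd (dsum f l) (dsum g l)).
Proof.
  induction l as [|[b x] l IH]; simpl; [apply deq_sym, ax_zero|].
  eapply deq_trans; [apply deq_add; [apply ax_distr_vec | exact IH]|].
  apply deq_add_swap.
Qed.

Lemma dsum_scale al (f : X -> tdist) l :
  deq (dsum (fun x => DScale al (f x)) l) (DScale al (dsum f l)).
Proof.
  induction l as [|[b x] l IH]; simpl; [apply deq_sym, ax_scale_zero|].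
  eapply deq_trans; [apply deq_add; [apply ax_mult | exact IH]|].
  eapply deq_trans; [|apply deq_sym, ax_distr_vec].
  apply deq_add; [|apply deq_refl].
  rewrite Cmult_comm. apply deq_sym, ax_mult.
Qed.

End LinearSums.

Lemma bsum_sum_dist l ws :
  deq (bsum (sum_dist l) ws) (dsum (fun t => bsum t ws) l).
Proof.
  induction l as [|[a t] l IH]; simpl; [apply (dsum_zero ws)|].
  change (bsum (DAdd (DScale a t) (sum_dist l)) ws) with
    (dsum (fun w => DAdd (DScale a (subst1 t w)) (subst1 (sum_dist l) w)) ws).
  eapply deq_trans; [apply dsum_add|].
  apply deq_add; [apply (dsum_scale a (subst1 t)) | exact IH].
Qed.

Definition apply_abs (ws : list (C * value)) (t : term) : tdist :=
  match t with
  | Val (Lam body) => bsum body ws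
  | _ => DTm t
  end.

Lemma dlin_apply_abs_sum_abs ws l :
  dlin (apply_abs ws) (sum_abs l) = dsum (fun t => bsum t ws) l.
Proof. induction l as [|[a t] l IH]; simpl; congruence. Qed.

Lemma bsum_sum_dist_deq l l' ws :
  deq (sum_abs l) (sum_abs l') ->
  deq (bsum (sum_dist l) ws) (dsum (fun t => bsum t ws) l').
Proof.
  intros Hl. apply (dlin_deq (apply_abs ws)) in Hl.
  rewrite !dlin_apply_abs_sum_abs in Hl.
  eapply deq_trans; [apply bsum_sum_dist | exact Hl].
Qed.

(* Equality of terms is undecidable (scalars are real numbers), hence the
   classical test. *)
Fixpoint coeff (u : term) (d : tdist) : C :=
  match d with
  | DZero => RtoC 0
  | DTm t => if excluded_middle_informative (t = u) then RtoC 1 else RtoC 0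
  | DAdd a b => Cplus (coeff u a) (coeff u b)
  | DScale al e => Cmult al (coeff u e)
  end.

Lemma coeff_deq u d e : deq d e -> coeff u d = coeff u e.
Proof.
  induction 1; simpl; try congruence.
  - apply Cplus_0_r.
  - apply Cplus_comm.
  - symmetry; apply Cplus_assoc.
  - apply Cmult_1_l.
  - apply Cmult_assoc.
  - apply Cmult_plus_distr_r.
  - apply Cmult_plus_distr_l.
  - apply Cmult_0_r.
Qed.

Lemma deq_DTm_inj t t' : deq (DTm t) (DTm t') -> t = t'.
Proof.
  intros H. apply (coeff_deq t) in H. simpl in H.
  destruct (excluded_middle_informative (t = t)) as [_|n]; [|congruence].
  destruct (excluded_middle_informative (t' = t)) as [e|_]; [auto|].
  injection H. intros H10. contradiction (R1_neq_R0 H10).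
Qed.

Lemma realizes_deq d e B : deq d e -> realizes d B -> realizes e B.
Proof.
  intros Hde [v [Hv Bv]]. exists v. split; [|exact Bv].
  eapply Relation_Operators.rt_trans; [|exact Hv].
  apply Relation_Operators.rt_step. left. apply deq_sym, Hde.
Qed.

Lemma closed_sum_dist l :
  (forall p, In p l -> closed_v 0 (Lam (snd p))) -> closed_d 1 (sum_dist l).
Proof.
  induction l as [|[a t] l IH]; simpl; intros Hl; [exact I|].
  split; [apply (Hl (a, t)); left; reflexivity|].
  apply IH. intros p Hp. apply Hl. right. exact Hp.
Qed.

Theorem proposition4 (A B : tdist -> Prop) (HA : is_type A) (HB : is_type B)
  (l : list (C * tdist))
  (Hclosed : forall p, In p l -> closed_v 0 (Lam (snd p)))
  (HS : in_S (sum_abs l)) :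
  Arrow_sem A B (sum_abs l) <-> arrow_sem A B (DTm (Val (Lam (sum_dist l)))).
Proof.
  split.
  - intros [_ [l' [Hl' Hreal]]].
    exists (sum_dist l). split; [apply deq_refl|].
    split; [apply closed_sum_dist, Hclosed|].
    intros v Av. destruct (Hreal v Av) as [ws [Hws Hr]].
    exists ws. split; [exact Hws|].
    eapply realizes_deq; [|exact Hr].
    apply deq_sym, bsum_sum_dist_deq, Hl'.
  - intros [body [Hbody [_ Hreal]]].
    apply deq_DTm_inj in Hbody. injection Hbody. intros <-.
    split; [exact HS|]. exists l. split; [apply deq_refl|].
    intros v Av. destruct (Hreal v Av) as [ws [Hws Hr]].
    exists ws. split; [exact Hws|].
    eapply realizes_deq; [apply bsum_sum_dist | exact Hr].
Qed.
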